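(* Let $m,n\in\mathbb{N}$ and let $H_{m,n}=\langle x^m,y^n\rangle\le F$, where $x=x_0$ and $y=x_0^2x_1$. Then there is an element $h\in H_{m,n}$ and a dyadic fraction $\alpha\in(0,1)$ such that $h(\alpha)=\alpha$, $h'(\alpha^-)=1$ and $h'(\alpha^+)=2$.
   Context: Thompson's group $F$ is the group of piecewise linear homeomorphisms of $[0,1]$ with finitely many dyadic breakpoints and slopes integer powers of $2$; composition is from left to right. Writing numbers in $(0,1)$ as $.s$ with $s$ an infinite binary word, $x_0$ maps $.00\alpha\mapsto .0\alpha$, $.01\alpha\mapsto .10\alpha$, $.1\alpha\mapsto .11\alpha$, and $x_1$ maps $.0\alpha\mapsto .0\alpha$, $.100\alpha\mapsto .10\alpha$, $.101\alpha\mapsto .110\alpha$, $.11\alpha\mapsto .111\alpha$. Here $h'(\alpha^-)$ and $h'(\alpha^+)$ denote the left and right derivatives of $h$ at $\alpha$. *)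

From Stdlib Require Import Reals Lra.
From Coquelicot Require Import Coquelicot.
Open Scope R_scope.

(* Elements of Thompson's group F are represented as functions R -> R
   (extended by the identity outside [0,1]).  Composition in F is from
   left to right: the product g h means "first g, then h", i.e. h o g. *)

Definition x0 (t : R) : R :=
  if Rlt_dec t 0 then t
  else if Rle_dec t (1/4) then 2 * t
  else if Rle_dec t (1/2) then t + 1/4
  else if Rle_dec t 1 then t / 2 + 1/2
  else t.

Definition x0inv (t : R) : R :=
  if Rlt_dec t 0 then t
  else if Rle_dec t (1/2) then t / 2
  else if Rle_dec t (3/4) then t - 1/4
  else if Rle_dec t 1 then 2 * t - 1
  else t.

Definition x1 (t : R) : R :=
  if Rlt_dec t 0 then t
  else if Rle_dec t (1/2) then t
  else if Rle_dec t (5/8) then 2 * t - 1/2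
  else if Rle_dec t (3/4) then t + 1/8
  else if Rle_dec t 1 then t / 2 + 1/2
  else t.

Definition x1inv (t : R) : R :=
  if Rlt_dec t 0 then t
  else if Rle_dec t (1/2) then t
  else if Rle_dec t (3/4) then (t + 1/2) / 2
  else if Rle_dec t (7/8) then t - 1/8
  else if Rle_dec t 1 then 2 * t - 1
  else t.

(* x = x0, y = x0^2 x1 (left-to-right: apply x0, x0, then x1). *)
Definition gx : R -> R := x0.
Definition gxinv : R -> R := x0inv.
Definition gy (t : R) : R := x1 (x0 (x0 t)).
Definition gyinv (t : R) : R := x0inv (x0inv (x1inv t)).

Fixpoint fpow (k : nat) (f : R -> R) (t : R) : R :=
  match k with
  | O => t
  | S k' => f (fpow k' f t)
  end.

Inductive in_H (m n : nat) : (R -> R) -> Prop :=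
  | H_id : in_H m n (fun t => t)
  | H_xm : forall h, in_H m n h -> in_H m n (fun t => fpow m gx (h t))
  | H_xmi : forall h, in_H m n h -> in_H m n (fun t => fpow m gxinv (h t))
  | H_yn : forall h, in_H m n h -> in_H m n (fun t => fpow n gy (h t))
  | H_yni : forall h, in_H m n h -> in_H m n (fun t => fpow n gyinv (h t)).

Definition dyadic (a : R) : Prop :=
  exists (k : Z) (p : nat), a = IZR k / 2 ^ p.

Definition left_deriv (h : R -> R) (a l : R) : Prop :=
  filterlim (fun t => (h t - h a) / (t - a)) (at_left a) (locally l).
Definition right_deriv (h : R -> R) (a l : R) : Prop :=
  filterlim (fun t => (h t - h a) / (t - a)) (at_right a) (locally l).

From Stdlib Require Import Reals Lra Lia FunctionalExtensionality.
From Coquelicot Require Import Coquelicot.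
Open Scope R_scope.

(* The witness is h = x^{-2N} y^N with N = m n.  On [0, 1/2] the map x^{-1}
   halves and on [0, 3/16] the map y multiplies by 4, so h is the identity on
   [0, 1/2]; on [1/2, 5/8] the first factor x^{-1} acts instead as t - 1/4,
   which costs one halving, so h has slope 2 there.  Hence h fixes the dyadic
   point 1/2 with one-sided derivatives 1 and 2. *)

Lemma fpow_add (f : R -> R) (a b : nat) (t : R) :
  fpow a f (fpow b f t) = fpow (a + b) f t.
Proof. induction a as [|a IH]; simpl; [reflexivity | now rewrite IH]. Qed.

Lemma fpow_mul (f : R -> R) (k j : nat) (t : R) :
  fpow k (fpow j f) t = fpow (k * j) f t.
Proof.
  induction k as [|k IH]; simpl; [reflexivity |].
  now rewrite IH, fpow_add.
Qed.

Lemma fpow_closed (P : (R -> R) -> Prop) (g : R -> R) (k : nat) :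
  (forall h, P h -> P (fun t => g (h t))) ->
  forall h, P h -> P (fun t => fpow k g (h t)).
Proof.
  intros Hg h Hh; induction k as [|k IH]; simpl; [exact Hh | exact (Hg _ IH)].
Qed.

Lemma fpow_scale (f : R -> R) (c b : R) :
  0 <= c -> (forall s, 0 <= s <= b -> f s = c * s) ->
  forall (k : nat) (t : R), 0 <= t -> (forall j, (j < k)%nat -> c ^ j * t <= b) ->
  fpow k f t = c ^ k * t.
Proof.
  intros Hc Hf k t Ht Hb; induction k as [|k IH]; simpl; [ring |].
  rewrite IH by (intros j Hj; apply Hb; lia).
  rewrite Hf; [ring |].
  split; [apply Rmult_le_pos; [apply pow_le |]; assumption | apply Hb; lia].
Qed.

Lemma x0inv_low (t : R) : 0 <= t <= 1/2 -> x0inv t = / 2 * t.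
Proof.
  intros Ht; unfold x0inv.
  destruct (Rlt_dec t 0); [lra |]; destruct (Rle_dec t (1/2)); lra.
Qed.

Lemma x0inv_mid (t : R) : 1/2 < t <= 3/4 -> x0inv t = t - 1/4.
Proof.
  intros Ht; unfold x0inv.
  destruct (Rlt_dec t 0); [lra |]; destruct (Rle_dec t (1/2)); [lra |].
  destruct (Rle_dec t (3/4)); lra.
Qed.

Lemma gy_low (t : R) : 0 <= t <= 3/16 -> gy t = 4 * t.
Proof.
  intros Ht; unfold gy, x0, x1.
  destruct (Rlt_dec t 0); [lra |]; destruct (Rle_dec t (1/4)); [| lra].
  destruct (Rlt_dec (2 * t) 0); [lra |].
  destruct (Rle_dec (2 * t) (1/4)).
  - destruct (Rlt_dec (2 * (2 * t)) 0); [lra |].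
    destruct (Rle_dec (2 * (2 * t)) (1/2)); [lra |].
    destruct (Rle_dec (2 * (2 * t)) (5/8)); lra.
  - destruct (Rle_dec (2 * t) (1/2)); [| lra].
    destruct (Rlt_dec (2 * t + 1/4) 0); [lra |].
    destruct (Rle_dec (2 * t + 1/4) (1/2)); [lra |].
    destruct (Rle_dec (2 * t + 1/4) (5/8)); lra.
Qed.

Lemma fpow_x0inv_low (k : nat) (t : R) :
  0 <= t <= 1/2 -> fpow k x0inv t = (/ 2) ^ k * t.
Proof.
  intros Ht; apply (fpow_scale _ _ (1/2)); [lra | exact x0inv_low | lra |].
  intros j _.
  assert ((/ 2) ^ j <= 1) by (rewrite <- (pow1 j); apply pow_incr; lra).
  nra.
Qed.

Lemma fpow_gy_low (k : nat) (t : R) :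
  0 <= t -> 4 ^ k * t <= 3/4 -> fpow k gy t = 4 ^ k * t.
Proof.
  intros Ht Hk; apply (fpow_scale _ _ (3/16)); [lra | exact gy_low | exact Ht |].
  intros j Hj.
  assert (4 ^ S j <= 4 ^ k) by (apply Rle_pow; [lra | exact Hj]).
  simpl in *; nra.
Qed.

Definition hkink (N : nat) (t : R) : R := fpow N gy (fpow (2 * N) gxinv t).

Lemma hkink_low (N : nat) (t : R) : 0 <= t <= 1/2 -> hkink N t = t.
Proof.
  intros Ht; unfold hkink, gxinv.
  assert (E : (/ 2) ^ (2 * N) = / 4 ^ N)
    by (rewrite pow_inv, pow_mult; f_equal; f_equal; lra).
  assert (Hpow : 0 < 4 ^ N) by (apply pow_lt; lra).
  assert (Hinv : 0 < / 4 ^ N) by (apply Rinv_0_lt_compat, Hpow).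
  assert (Cancel : 4 ^ N * (/ 4 ^ N * t) = t) by (field; lra).
  rewrite fpow_x0inv_low, E, fpow_gy_low by (rewrite ?Cancel; nra).
  exact Cancel.
Qed.

Lemma hkink_mid (N : nat) (t : R) :
  (1 <= N)%nat -> 1/2 < t <= 5/8 -> hkink N t = 2 * t - 1/2.
Proof.
  intros HN Ht; destruct N as [|K]; [lia |]; unfold hkink, gxinv.
  replace (2 * S K)%nat with (S (2 * K) + 1)%nat by lia.
  rewrite <- fpow_add; simpl (fpow 1 _ t).
  assert (E : (/ 2) ^ S (2 * K) = / 2 * / 4 ^ K)
    by (rewrite <- tech_pow_Rmult, pow_inv, pow_mult; do 3 f_equal; lra).
  assert (Hpow : 0 < 4 ^ K) by (apply pow_lt; lra).
  assert (Hinv : 0 < / 4 ^ K) by (apply Rinv_0_lt_compat, Hpow).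
  assert (Cancel : 4 ^ S K * (/ 2 * / 4 ^ K * (t - 1/4)) = 2 * t - 1/2)
    by (simpl; field; lra).
  rewrite x0inv_mid, fpow_x0inv_low, E, fpow_gy_low by (rewrite ?Cancel; nra).
  exact Cancel.
Qed.

Lemma left_deriv_of_affine (h : R -> R) (a l δ : R) :
  0 < δ -> (forall t, a - δ < t < a -> h t = h a + l * (t - a)) ->
  left_deriv h a l.
Proof.
  intros Hδ Hh; apply filterlim_ext_loc with (f := fun _ => l);
    [| apply filterlim_const].
  exists (mkposreal δ Hδ); intros t Ht Hlt.
  apply Rabs_lt_between' in Ht; simpl in Ht.
  rewrite Hh by lra; field; lra.
Qed.

Lemma right_deriv_of_affine (h : R -> R) (a l δ : R) :
  0 < δ -> (forall t, a < t < a + δ -> h t = h a + l * (t - a)) ->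
  right_deriv h a l.
Proof.
  intros Hδ Hh; apply filterlim_ext_loc with (f := fun _ => l);
    [| apply filterlim_const].
  exists (mkposreal δ Hδ); intros t Ht Hgt.
  apply Rabs_lt_between' in Ht; simpl in Ht.
  rewrite Hh by lra; field; lra.
Qed.

Lemma in_H_hkink (m n : nat) : in_H m n (hkink (m * n)).
Proof.
  assert (E : hkink (m * n) =
              fun t => fpow m (fpow n gy) (fpow (2 * n) (fpow m gxinv) t)).
  { apply functional_extensionality; intros t; unfold hkink.
    rewrite !fpow_mul; do 2 f_equal; lia. }
  rewrite E; apply (fpow_closed _ _ _ (H_yn m n)).
  apply (fpow_closed (in_H m n) _ _ (H_xmi m n) _ (H_id m n)).
Qed.

Theorem lemma3p2 (m n : nat) (hm : (1 <= m)%nat) (hn : (1 <= n)%nat) :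
  exists (h : R -> R) (a : R),
    in_H m n h /\ dyadic a /\ 0 < a < 1 /\
    h a = a /\ left_deriv h a 1 /\ right_deriv h a 2.
Proof.
  assert (HN : (1 <= m * n)%nat) by nia.
  assert (Hfix : hkink (m * n) (1/2) = 1/2) by (apply hkink_low; lra).
  exists (hkink (m * n)), (1/2); repeat split.
  - apply in_H_hkink.
  - exists 1%Z, 1%nat; simpl; lra.
  - lra.
  - lra.
  - exact Hfix.
  - apply (left_deriv_of_affine _ _ _ (1/2)); [lra |].
    intros t Ht; rewrite Hfix, hkink_low by lra; ring.
  - apply (right_deriv_of_affine _ _ _ (1/8)); [lra |].
    intros t Ht; rewrite Hfix, hkink_mid by (assumption || lra); ring.
Qed.
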